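(* Let $G=(V,E)$ be a finite simple graph which is $S_{1,1,5}$-free, $K_4$-free, diamond-free and butterfly-free. Let $xy\in E$ and let $r$ be a vertex with $rx\in E$ and $ry\notin E$. For $i\ge 1$ let $N_i=\{z\in V:\operatorname{dist}_G(z,\{x,y\})=i\}$. Assume $N_2=\{u_1,\dots,u_k\}$ is an independent set, and for each $i$ let $T_i$ be the set of vertices $t\in N_3$ whose only neighbor in $N_2$ is $u_i$. If $|N_2|\ge 5$, then there is no induced path $(u_i,t_i,z_1,z_2,z_3)$ with $t_i\in T_i$, $z_1\in N_4$, $z_2\in N_4\cup N_5$ and $z_3\in N_4\cup N_5\cup N_6$.
   Context: $S_{1,1,5}$ is the tree with a center $u$ adjacent to $a$, $b$ and $z_1$, where $u,z_1,\dots,z_5$ is an induced path, and no other edges. A diamond is $K_4$ minus one edge; a butterfly consists of two disjoint edges (inducing $2K_2$) together with a vertex adjacent to all four of their endpoints. $\operatorname{dist}_G(z,\{x,y\})$ is the minimum of the distances from $z$ to $x$ and to $y$. *)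

From mathcomp Require Import all_boot.
Set Implicit Arguments. Unset Strict Implicit. Unset Printing Implicit Defensive.

Definition simple_graph (T : finType) (e : rel T) : Prop :=
  symmetric e /\ irreflexive e.

Definition mk_graph (n : nat) (l : seq (nat * nat)) : rel 'I_n :=
  fun i j => ((nat_of_ord i, nat_of_ord j) \in l) || ((nat_of_ord j, nat_of_ord i) \in l).

Definition induced_sub (T : finType) (e : rel T) (n : nat) (h : rel 'I_n) : Prop :=
  exists f : 'I_n -> T, injective f /\ forall i j, e (f i) (f j) = h i j.

Definition H_free (T : finType) (e : rel T) (n : nat) (h : rel 'I_n) : Prop :=
  ~ induced_sub e h.

(* S_{1,1,5}: 0 = u (center), 1 = a, 2 = b, 3..7 = z1..z5. *)
Definition S115 : rel 'I_8 :=
  mk_graph [:: (0,1); (0,2); (0,3); (3,4); (4,5); (5,6); (6,7)].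
Definition K4 : rel 'I_4 :=
  mk_graph [:: (0,1); (0,2); (0,3); (1,2); (1,3); (2,3)].
Definition diamond : rel 'I_4 :=
  mk_graph [:: (0,1); (0,2); (0,3); (1,2); (1,3)].
Definition butterfly : rel 'I_5 :=
  mk_graph [:: (0,1); (2,3); (4,0); (4,1); (4,2); (4,3)].

Definition walk_len (T : finType) (e : rel T) (A : pred T) (i : nat) (z : T) : Prop :=
  exists a, A a /\ exists s : seq T, [/\ path e a s, size s = i & last a s = z].

Definition dist_set (T : finType) (e : rel T) (A : pred T) (z : T) (i : nat) : Prop :=
  walk_len e A i z /\ forall j, j < i -> ~ walk_len e A j z.

Definition induced_path (T : finType) (e : rel T) (s : seq T) : Prop :=
  uniq s /\
  forall x0 i j, i < size s -> j < size s ->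
    e (nth x0 s i) (nth x0 s j) = (i.+1 == j) || (j.+1 == i).

From mathcomp Require Import all_boot.
Set Implicit Arguments. Unset Strict Implicit. Unset Printing Implicit Defensive.

(* Fix a neighbour w in N_1 of u. A claw at w with one leaf in N_0, one leaf
   v in N_2 and the long leg u t z1 z2 z3 would be an induced S_{1,1,5}, so u
   is the only neighbour of w in N_2; hence every v in N_2 \ {u} has a
   neighbour n_v in N_1 missing u, and n_v <> w. A claw at n_v with two leaves
   in N_2 \ {u} and a leg through w, u, t (entering w directly or through
   N_0) shows that the n_v are pairwise distinct. Let p in N_0 be adjacent to
   w and q the other vertex of N_0. Since K4 and the diamond are excluded,
   every edge lies in at most one triangle; with S_{1,1,5}- and
   butterfly-freeness this allows at most one n_v adjacent to p and at most
   two non-adjacent to p. So |N_2 \ {u}| <= 3. *)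

Section Layers.
Variables (T : finType) (e : rel T) (A : pred T).
Local Notation D i z := (dist_set e A z i).

Lemma walk_len_adj i a b : walk_len e A i a -> e a b -> walk_len e A i.+1 b.
Proof.
case=> a0 [A_a0 [s [walk_s size_s last_s]]] eab; exists a0; split=> //.
by exists (rcons s b); rewrite rcons_path walk_s last_s eab size_rcons size_s last_rcons.
Qed.

Lemma dist_adj_le i j a b : D i a -> D j b -> e a b -> j <= i.+1.
Proof.
move=> [walk_a _] [_ min_b] eab; rewrite leqNgt; apply/negP => lt_ij.
exact: min_b _ lt_ij (walk_len_adj walk_a eab).
Qed.

Lemma dist_nadj i j a b : D i a -> D j b -> i.+1 < j -> ~~ e a b.
Proof.
move=> Da Db lt_ij; apply/negP => eab.
by have := dist_adj_le Da Db eab; rewrite leqNgt lt_ij.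
Qed.

Lemma dist_uniq i j z : D i z -> D j z -> i = j.
Proof.
move=> [walk_i min_i] [walk_j min_j].
by case: (ltngtP i j) => // [/min_j/(_ walk_i) | /min_i/(_ walk_j)].
Qed.

Lemma dist_neq i j a b : D i a -> D j b -> i != j -> a != b.
Proof.
by move=> Da Db; apply: contraNneq => eab; rewrite eab in Da; rewrite (dist_uniq Da Db).
Qed.

Lemma dist_pred i z : D i.+1 z -> exists2 a, D i a & e a z.
Proof.
case=> [[a0 [A_a0 [s [walk_s size_s last_s]]]] min_z].
case/lastP: s walk_s size_s last_s => [//|s b].
rewrite rcons_path last_rcons size_rcons => /andP[walk_s eb] [size_s] eq_bz.
rewrite eq_bz in eb; exists (last a0 s) => //; split.
  by exists a0; split=> //; exists s.
by move=> j lt_ji /walk_len_adj/(_ eb); apply: min_z.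
Qed.

Lemma dist0P a : D 0 a <-> A a.
Proof.
split; first by case=> [[a0 [A_a0 [s [_ /size0nil -> <-]]]] _].
by move=> A_a; split=> [|//]; exists a; split=> //; exists [::].
Qed.

Definition dist_gt k z := exists2 i, k < i & D i z.

Lemma dist_gt_nadj i k a b : D i a -> dist_gt k b -> i < k -> ~~ e a b.
Proof.
by move=> Da [j lt_kj Db] lt_ik; apply: dist_nadj Da Db _; apply: leq_ltn_trans lt_kj.
Qed.

Lemma dist_gt_neq i k a b : D i a -> dist_gt k b -> i <= k -> a != b.
Proof.
move=> Da [j lt_kj Db] le_ik; apply: dist_neq Da Db _.
by rewrite neq_ltn (leq_ltn_trans le_ik lt_kj).
Qed.

End Layers.

Lemma induced_sub_tuple (T : finType) (e : rel T) n (h : rel 'I_n) (s : n.-tuple T) :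
  uniq s -> (forall i j, e (tnth s i) (tnth s j) = h i j) -> induced_sub e h.
Proof. by move=> /tuple_uniqP s_inj s_h; exists (tnth s). Qed.

Lemma adj_neq (T : eqType) (e : rel T) a b : irreflexive e -> e a b -> a != b.
Proof. by move=> e_irr; apply: contraTneq => ->; rewrite e_irr. Qed.

Lemma count_le_uniq (T : eqType) (P : pred T) (s : seq T) k : uniq s ->
  (forall s', uniq s' -> size s' = k.+1 -> all P s' -> {subset s' <= s} -> False) ->
  count P s <= k.
Proof.
move=> us small; rewrite leqNgt; apply/negP => lt_k.
have sub : {subset take k.+1 (filter P s) <= filter P s} by move=> z /mem_take.
apply: (small (take k.+1 (filter P s))).
- by rewrite take_uniq // filter_uniq.
- by rewrite size_takel // size_filter.
- by apply/allP => z /sub; rewrite mem_filter => /andP[].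
- by move=> z /sub; rewrite mem_filter => /andP[].
Qed.

Ltac layer_nadj a b :=
  match goal with
  | Da : dist_set _ _ a _, Db : dist_set _ _ b _ |- _ => by apply: (dist_nadj Da Db)
  | Da : dist_set _ _ a _, Db : dist_gt _ _ _ b |- _ => by apply: (dist_gt_nadj Da Db)
  end.

Ltac layer_neq a b :=
  match goal with
  | Da : dist_set _ _ a _, Db : dist_set _ _ b _ |- _ => by apply: (dist_neq Da Db)
  | Da : dist_set _ _ a _, Db : dist_gt _ _ _ b |- _ => by apply: (dist_gt_neq Da Db)
  end.

Ltac graph_fact :=
  lazymatch goal with
  | e_sym : symmetric ?e |- is_true (?e ?a ?b) => first [done | by rewrite e_sym]
  | e_sym : symmetric ?e, e_irr : irreflexive ?e |- is_true (~~ ?e ?a ?b) =>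
      first [ by rewrite e_irr | done | by rewrite e_sym
            | layer_nadj a b | rewrite e_sym; layer_nadj b a ]
  | e_sym : symmetric ?e, e_irr : irreflexive ?e |- is_true (?a != ?b) =>
      first [ done | by rewrite eq_sym
            | by apply: (adj_neq e_irr); first [done | by rewrite e_sym]
            | layer_neq a b | rewrite eq_sym; layer_neq b a ]
  end.

Ltac case_ord :=
  let i := fresh "i" in let lt_i := fresh "lt_i" in
  intros [i lt_i]; repeat (destruct i as [|i]; [ | try (exfalso; discriminate lt_i)]).

(* [induced_by s] proves [induced_sub e h] for a concrete pattern [h] by
   mapping it onto the tuple [s]. Each adjacency, non-adjacency and
   distinctness obligation is closed by [graph_fact]: from a hypothesis, by
   symmetry or irreflexivity, or because the two vertices lie in BFS layers
   at distance >= 2 (resp. in different layers). *)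
Ltac induced_by s :=
  apply: (induced_sub_tuple (s := s));
  [ rewrite /= !inE !negb_or; repeat (apply/andP; split); first [exact: isT | graph_fact]
  | case_ord; case_ord; rewrite /tnth /=;
    match goal with |- _ = ?b => let b' := eval vm_compute in b in change b with b' end;
    lazymatch goal with
    | |- ?l = true => change (is_true l)
    | |- _ = false => apply/negbTE
    end; graph_fact ].


Section PathFromT.
Variables (T : finType) (e : rel T) (x y u t z1 z2 z3 : T).
Hypothesis e_simple : simple_graph e.
Hypotheses (S115_free : H_free e S115) (K4_free : H_free e K4).
Hypotheses (diamond_free : H_free e diamond) (butterfly_free : H_free e butterfly).
Hypothesis exy : e x y.

Local Notation A := (fun a => (a == x) || (a == y)).
Local Notation N i z := (dist_set e A z i).

Hypothesis N2_indep : forall v v', N 2 v -> N 2 v' -> ~~ e v v'.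
Hypotheses (N2u : N 2 u) (N3t : N 3 t) (t_N2_nbr : forall v, N 2 v -> e t v -> v = u).
Hypotheses (N4z1 : N 4 z1) (N45z2 : N 4 z2 \/ N 5 z2) (N456z3 : N 4 z3 \/ N 5 z3 \/ N 6 z3).
Hypothesis path_utz : induced_path e [:: u; t; z1; z2; z3].

Let e_sym : symmetric e. Proof. by case: e_simple. Qed.
Let e_irr : irreflexive e. Proof. by case: e_simple. Qed.

Let far_z1 : dist_gt e A 3 z1. Proof. by exists 4. Qed.
Let far_z2 : dist_gt e A 3 z2. Proof. by case: N45z2; [exists 4 | exists 5]. Qed.
Let far_z3 : dist_gt e A 3 z3.
Proof. by case: N456z3 => [|[]]; [exists 4 | exists 5 | exists 6]. Qed.

Let eut : e u t. Proof. exact: (path_utz.2 u 0 1 erefl erefl). Qed.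
Let etz1 : e t z1. Proof. exact: (path_utz.2 u 1 2 erefl erefl). Qed.
Let ez1z2 : e z1 z2. Proof. exact: (path_utz.2 u 2 3 erefl erefl). Qed.
Let ez2z3 : e z2 z3. Proof. exact: (path_utz.2 u 3 4 erefl erefl). Qed.
Let ntz2 : ~~ e t z2. Proof. by rewrite (path_utz.2 u 1 3 erefl erefl). Qed.
Let ntz3 : ~~ e t z3. Proof. by rewrite (path_utz.2 u 1 4 erefl erefl). Qed.
Let nz1z3 : ~~ e z1 z3. Proof. by rewrite (path_utz.2 u 2 4 erefl erefl). Qed.
Let z1z3 : z1 != z3. Proof. by apply: contraTneq etz1 => ->. Qed.

Lemma triangle_nadj a b c d : e a b -> e a c -> e b c -> e a d -> c != d -> ~~ e b d.
Proof.
move=> eab eac ebc ead ncd; apply/negP => ebd.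
have [ecd|necd] := boolP (e c d).
  by apply: K4_free; induced_by [tuple a; b; c; d].
by apply: diamond_free; induced_by [tuple a; b; c; d].
Qed.

Lemma N0_cases a : N 0 a -> a = x \/ a = y.
Proof. by move/dist0P/orP => [] /eqP ->; [left | right]. Qed.

Lemma N0_other p : N 0 p -> exists2 q, N 0 q & p != q.
Proof.
have N0x : N 0 x by apply/dist0P; rewrite /= eqxx.
have N0y : N 0 y by apply/dist0P; rewrite /= eqxx orbT.
by case/N0_cases=> ->; [exists y | exists x]; rewrite // ?(eq_sym y) (adj_neq e_irr exy).
Qed.

Lemma N2_nadj_t v : N 2 v -> v != u -> ~~ e v t.
Proof. by move=> N2v; apply: contraNN => evt; apply/eqP/t_N2_nbr; rewrite // e_sym. Qed.

Lemma N2_nbr_of_u_nbr w v : N 1 w -> e w u -> N 2 v -> e w v -> v = u.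
Proof.
move=> N1w ewu N2v ewv; have [//|vu] := eqVneq v u; exfalso.
have [p N0p epw] := dist_pred N1w.
have nvt := N2_nadj_t N2v vu; have nvu := N2_indep N2v N2u.
by apply: S115_free; induced_by [tuple w; p; v; u; t; z1; z2; z3].
Qed.

Lemma N2_private_nbr v : N 2 v -> v != u -> exists n, [/\ N 1 n, e n v & ~~ e n u].
Proof.
move=> N2v vu; have [n N1n env] := dist_pred N2v; exists n; split=> //.
by apply: contra vu => enu; rewrite (N2_nbr_of_u_nbr N1n enu N2v env).
Qed.

Section NbrOfU.
Variable w : T.
Hypotheses (N1w : N 1 w) (ewu : e w u).

Definition N1_avoid n := [/\ N 1 n, ~~ e n u & n != w].

Lemma N2_nadj_w v : N 2 v -> v != u -> ~~ e w v.
Proof. by move=> N2v; apply: contraNN => /(N2_nbr_of_u_nbr N1w ewu N2v)/eqP. Qed.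

Lemma shared_N0_nbr a b n n' : N 0 a -> N 0 b -> e a b -> e w a -> e w b ->
  N1_avoid n -> N1_avoid n' -> n != n' -> e n a -> e n' a -> False.
Proof.
move=> N0a N0b eab ewa ewb [N1n nnu nw] [N1n' nn'u n'w] nn' ena en'a.
have off_w m : N 1 m -> e m a -> ~~ e m w.
  by move=> N1m ema; rewrite e_sym; apply: (triangle_nadj (a := a) (c := b)); graph_fact.
have off_b m : m != w -> e m a -> ~~ e m b.
  by move=> mw ema; rewrite e_sym; apply: (triangle_nadj (a := a) (c := w)); graph_fact.
have [nnw n'nw] := (off_w n N1n ena, off_w n' N1n' en'a).
have [nnb n'nb] := (off_b n nw ena, off_b n' n'w en'a).
have [enn'|nenn'] := boolP (e n n').
  by apply: butterfly_free; induced_by [tuple n; n'; w; b; a].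
by apply: S115_free; induced_by [tuple a; n; n'; w; u; t; z1; z2].
Qed.

Section NbrOfW.
Variables p q : T.
Hypotheses (N0p : N 0 p) (N0q : N 0 q) (pq : p != q) (ewp : e w p).

Let N0_pq a : N 0 a -> a = p \/ a = q.
Proof.
move=> N0a; move: pq.
by case: (N0_cases N0a) (N0_cases N0p) (N0_cases N0q) => [] -> [] -> [] ->;
  rewrite ?eqxx; auto.
Qed.

Let epq : e p q.
Proof. by move: pq; case: (N0_cases N0p) (N0_cases N0q) => [] -> [] ->; rewrite ?eqxx // e_sym. Qed.

Lemma N1_nadj_p n : N 1 n -> ~~ e n p -> e n q.
Proof.
move=> N1n; have [a N0a ean] := dist_pred N1n.
by case: (N0_pq N0a) ean => -> ean; rewrite !(e_sym n) ean.
Qed.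

Lemma N1_avoid_nbr_w n : N1_avoid n -> e n w -> e n p.
Proof.
case=> N1n nnu nw enw; apply/negPn/negP => nenp.
by apply: S115_free; induced_by [tuple w; p; n; u; t; z1; z2; z3].
Qed.

Lemma private_nbr_uniq n v v' : N 1 n -> ~~ e n u -> N 2 v -> N 2 v' ->
  v != u -> v' != u -> e n v -> e n v' -> v = v'.
Proof.
move=> N1n nnu N2v N2v' vu v'u env env'; have [//|vv'] := eqVneq v v'; exfalso.
have nvt := N2_nadj_t N2v vu; have nv't := N2_nadj_t N2v' v'u.
have nwv := N2_nadj_w N2v vu; have nwv' := N2_nadj_w N2v' v'u.
have nvu := N2_indep N2v N2u; have nv'u := N2_indep N2v' N2u.
have nvv' := N2_indep N2v N2v'.
have nw : n != w by apply: contraNneq nwv => <-.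
have [enw|nenw] := boolP (e n w).
  by apply: S115_free; induced_by [tuple n; v; v'; w; u; t; z1; z2].
have [enp|nenp] := boolP (e n p).
  by apply: S115_free; induced_by [tuple n; v; v'; p; w; u; t; z1].
have enq := N1_nadj_p N1n nenp.
have [ewq|newq] := boolP (e w q).
  by apply: S115_free; induced_by [tuple n; v; v'; q; w; u; t; z1].
by apply: S115_free; induced_by [tuple n; v; v'; q; p; w; u; t].
Qed.

Section OneSided.
Hypothesis nwq : ~~ e w q.

Lemma p_nbr_adj_w n : N1_avoid n -> e n p -> ~~ e n q -> e n w.
Proof.
case=> N1n nnu nw enp nenq; apply/negPn/negP => nenw.
by apply: S115_free; induced_by [tuple p; q; n; w; u; t; z1; z2].
Qed.

Lemma p_nbrs_mixed n n' : N1_avoid n -> N1_avoid n' -> n != n' ->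
  e n p -> e n' p -> e n q -> ~~ e n' q -> False.
Proof.
move=> [N1n _ nw] avn'; have [N1n' _ n'w] := avn'.
move=> nn' enp en'p enq nen'q; have en'w := p_nbr_adj_w avn' en'p nen'q.
have nnw : ~~ e n w by apply: (triangle_nadj (a := p) (c := q)); graph_fact.
have nnn' : ~~ e n n'.
  by rewrite e_sym; apply: (triangle_nadj (a := p) (c := w)); graph_fact.
by apply: butterfly_free; induced_by [tuple n'; w; n; q; p].
Qed.

Lemma two_p_nbrs_one_sided n n' : N1_avoid n -> N1_avoid n' -> n != n' ->
  e n p -> e n' p -> False.
Proof.
move=> avn avn' nn' enp en'p.
have [enq|nenq] := boolP (e n q); have [en'q|nen'q] := boolP (e n' q).
- by apply: (negP (triangle_nadj (a := p) (b := q) (c := n) _ _ _ _ nn')); graph_fact.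
- exact: p_nbrs_mixed avn avn' nn' enp en'p enq nen'q.
- by apply: p_nbrs_mixed avn' avn _ en'p enp en'q nenq; rewrite eq_sym.
have enw := p_nbr_adj_w avn enp nenq; have en'w := p_nbr_adj_w avn' en'p nen'q.
by apply: (negP (triangle_nadj (a := p) (b := w) (c := n) _ _ _ _ nn')); graph_fact.
Qed.

Lemma q_nbrs_adj n n' : N1_avoid n -> N1_avoid n' -> n != n' ->
  ~~ e n p -> ~~ e n' p -> e n n'.
Proof.
move=> avn avn' nn' nenp nen'p; apply/negPn/negP => nenn'.
have [[N1n nnu nw] [N1n' nn'u n'w]] := (avn, avn').
have enq := N1_nadj_p N1n nenp; have en'q := N1_nadj_p N1n' nen'p.
have nnw : ~~ e n w by apply: contraNN nenp; apply: N1_avoid_nbr_w.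
have nn'w : ~~ e n' w by apply: contraNN nen'p; apply: N1_avoid_nbr_w.
by apply: S115_free; induced_by [tuple q; n; n'; p; w; u; t; z1].
Qed.

Lemma three_q_nbrs_one_sided n1 n2 n3 : N1_avoid n1 -> N1_avoid n2 -> N1_avoid n3 ->
  n1 != n2 -> n1 != n3 -> n2 != n3 -> ~~ e n1 p -> ~~ e n2 p -> ~~ e n3 p -> False.
Proof.
move=> av1 av2 av3 n12 n13 n23 ne1p ne2p ne3p.
have e12 := q_nbrs_adj av1 av2 n12 ne1p ne2p; have e13 := q_nbrs_adj av1 av3 n13 ne1p ne3p.
have [N1n1 _ _] := av1; have [N1n2 _ _] := av2; have [N1n3 _ _] := av3.
have eq1 := N1_nadj_p N1n1 ne1p; have eq2 := N1_nadj_p N1n2 ne2p.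
have eq3 := N1_nadj_p N1n3 ne3p.
by apply: (negP (triangle_nadj (a := q) (b := n1) (c := n2) _ _ _ _ n23)); graph_fact.
Qed.

End OneSided.

Lemma two_p_nbrs n n' : N1_avoid n -> N1_avoid n' -> n != n' -> e n p -> e n' p -> False.
Proof.
move=> avn avn' nn' enp en'p; have [ewq|nwq] := boolP (e w q).
  exact: (shared_N0_nbr N0p N0q epq ewp ewq avn avn' nn' enp en'p).
exact: (two_p_nbrs_one_sided nwq avn avn' nn' enp en'p).
Qed.

Lemma three_q_nbrs n1 n2 n3 : N1_avoid n1 -> N1_avoid n2 -> N1_avoid n3 ->
  n1 != n2 -> n1 != n3 -> n2 != n3 -> ~~ e n1 p -> ~~ e n2 p -> ~~ e n3 p -> False.
Proof.
move=> av1 av2 av3 n12 n13 n23 ne1p ne2p ne3p; have [ewq|nwq] := boolP (e w q).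
  have [[N1n1 _ _] [N1n2 _ _]] := (av1, av2); have eqp : e q p by rewrite e_sym.
  have [eq1 eq2] := (N1_nadj_p N1n1 ne1p, N1_nadj_p N1n2 ne2p).
  exact: (shared_N0_nbr N0q N0p eqp ewq ewp av1 av2 n12 eq1 eq2).
exact: (three_q_nbrs_one_sided nwq av1 av2 av3 n12 n13 n23 ne1p ne2p ne3p).
Qed.

Lemma N1_avoid_size ns : uniq ns -> {in ns, forall n, N1_avoid n} -> size ns <= 3.
Proof.
move=> uns avns; rewrite -(count_predC (e^~ p) ns).
have in_ns m (s' : seq T) : {subset s' <= ns} -> m \in s' -> N1_avoid m.
  by move=> sub /sub/avns.
have le1 : count (e^~ p) ns <= 1.
  apply: count_le_uniq uns _ => -[|n [|n' []]] //= + _ /and3P[enp en'p _] sub.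
  rewrite inE andbT => nn'.
  apply: (two_p_nbrs (in_ns n _ sub _) (in_ns n' _ sub _) nn' enp en'p);
    by rewrite !inE eqxx ?orbT.
have le2 : count (predC (e^~ p)) ns <= 2.
  apply: count_le_uniq uns _ => -[|n1 [|n2 [|n3 []]]] //= + _ /and4P[ne1p ne2p ne3p _] sub.
  rewrite !inE !negb_or !andbT => /andP[/andP[n12 n13] n23].
  by apply: (three_q_nbrs (in_ns n1 _ sub _) (in_ns n2 _ sub _) (in_ns n3 _ sub _)
    n12 n13 n23 ne1p ne2p ne3p); rewrite !inE eqxx ?orbT.
exact: leq_add le1 le2.
Qed.

Lemma N1_avoid_of_N2 vs : uniq vs -> {in vs, forall v, N 2 v /\ v != u} ->
  exists2 ns, uniq ns /\ size ns = size vs &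
    {in ns, forall n, N1_avoid n /\ exists2 v, v \in vs & e n v}.
Proof.
elim: vs => [|v vs IH] /=; first by exists [::].
move=> /andP[vvs uvs] N2vs.
have N2vs' : {in vs, forall z, N 2 z /\ z != u}.
  by move=> z zvs; apply: N2vs; rewrite inE zvs orbT.
have [ns [uns size_ns] avns] := IH uvs N2vs'.
have [N2v vu] := N2vs v (mem_head v vs).
have [n [N1n env nnu]] := N2_private_nbr N2v vu.
have nw : n != w by apply: contraNneq (N2_nadj_w N2v vu) => <-.
exists (n :: ns).
  split; last by rewrite /= size_ns.
  rewrite /= uns andbT; apply/negP => /avns[_ [v' v'vs env']].
  have [N2v' v'u] := N2vs' v' v'vs.
  by move: vvs; rewrite (private_nbr_uniq N1n nnu N2v N2v' vu v'u env env') v'vs.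
move=> m; rewrite inE => /predU1P[->|/avns[avm [v' v'vs emv']]].
  by split=> //; exists v; rewrite ?mem_head.
by split=> //; exists v'; rewrite // inE v'vs orbT.
Qed.

End NbrOfW.

End NbrOfU.

Lemma N2_size s : uniq s -> {in s, forall z, N 2 z} -> size s <= 4.
Proof.
move=> us N2s; have [w N1w ewu] := dist_pred N2u.
have [p N0p epw] := dist_pred N1w; have ewp : e w p by rewrite e_sym.
have [q N0q pq] := N0_other N0p.
have N2_rem : {in rem u s, forall v, N 2 v /\ v != u}.
  by move=> v; rewrite mem_rem_uniq // inE => /andP[vu /N2s].
have [ns [uns size_ns] avns] :=
  N1_avoid_of_N2 N1w ewu N0p N0q pq ewp (rem_uniq u us) N2_rem.
have := N1_avoid_size N1w ewu N0p N0q pq ewp uns (fun n nns => (avns n nns).1).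
have : (size s).-1 <= size (rem u s).
  by case: (boolP (u \in s)) => [/size_rem -> //|/rem_id ->]; exact: leq_pred.
rewrite -size_ns => /leq_trans le_s /le_s.
by case: (size s).
Qed.

End PathFromT.

Theorem lemma22 (T : finType) (e : rel T) (x y r : T) :
  simple_graph e ->
  H_free e S115 -> H_free e K4 -> H_free e diamond -> H_free e butterfly ->
  e x y -> e r x -> ~~ e r y ->
  let N := fun (i : nat) (z : T) => dist_set e (fun a => (a == x) || (a == y)) z i in
  (* N_2 is an independent set *)
  (forall u v, N 2 u -> N 2 v -> ~~ e u v) ->
  (* |N_2| >= 5 *)
  (exists s : seq T, [/\ uniq s, 5 <= size s & forall z, z \in s -> N 2 z]) ->
  forall u t z1 z2 z3 : T,
    N 2 u ->
    (* t \in T_u: t \in N_3 and the only neighbour of t in N_2 is u *)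
    N 3 t -> (forall v, N 2 v -> e t v -> v = u) -> e t u ->
    N 4 z1 -> (N 4 z2 \/ N 5 z2) -> (N 4 z3 \/ N 5 z3 \/ N 6 z3) ->
    ~ induced_path e [:: u; t; z1; z2; z3].
Proof.
move=> e_simple S115_free K4_free diamond_free butterfly_free exy _ _ N N2_indep
  [s [uniq_s size_s N2_s]] u t z1 z2 z3 N2u N3t t_N2_nbr _ N4z1 N45z2 N456z3 path_utz.
have := N2_size e_simple S115_free K4_free diamond_free butterfly_free exy N2_indep
  N2u N3t t_N2_nbr N4z1 N45z2 N456z3 path_utz uniq_s N2_s.
by rewrite leqNgt size_s.
Qed.
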